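(* Let $(\bm \Pi, S)$ be a price system with $S\in\mathbb{R}_+^{(N+1)\times K}$. If the market model is complete, then it is a least-squares market, i.e. $S^+\bm\Pi\in\mathcal{Q}$, where $S^+$ is the Moore–Penrose pseudoinverse of $S$.
   Context: Single-period market with finite sample space $\Omega$, $K=|\Omega|$. A price system $(\bm\Pi,S)$: $\bm\Pi=(1,\Pi_2,\dots,\Pi_{N+1})^T\in\mathbb{R}_+^{N+1}$ are current prices and $S\in\mathbb{R}_+^{(N+1)\times K}$, with $S_{i\omega}$ the payoff of asset $i$ in outcome $\omega$; the first row of $S$ is all ones (safe asset), and the assets are non-redundant (no row of $S$ is a linear combination of the others). The market is arbitrage-free if there is no $\bm v\in\mathbb{R}^{N+1}$ with $\bm v^T\bm\Pi\le 0$, $S^T\bm v\ge 0$ and $(S^T\bm v)_j>0$ for some $j$. An arbitrage-free market model is complete if for every $\bm D\in\mathbb{R}_+^K$ there exists $\bm\xi\in\mathbb{R}^{N+1}$ with $\bm D=S^T\bm\xi$. $\mathcal{Q}:=\{\bm q\in\mathbb{R}^K: q_k>0\ \forall k,\ \sum_k q_k=1,\ S\bm q=\bm\Pi\}$ is the set of equivalent martingale measures. An arbitrage-free market model is a least-squares market if $S^+\bm\Pi\in\mathcal{Q}$. *)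

From mathcomp Require Import all_boot all_order all_algebra.
Set Implicit Arguments. Unset Strict Implicit. Unset Printing Implicit Defensive.
Import Order.TTheory GRing.Theory Num.Theory.
Local Open Scope ring_scope.

Section Market.
Variable R : realFieldType.

(* X is a Moore-Penrose pseudoinverse of A (the four Penrose conditions;
   over a real field such an X exists and is unique). *)
Definition is_pinv (m n : nat) (A : 'M[R]_(m, n)) (X : 'M[R]_(n, m)) : Prop :=
  [/\ A *m X *m A = A, X *m A *m X = X,
      (A *m X)^T = A *m X & (X *m A)^T = X *m A].

Definition price_system (N K : nat) (Pi : 'cV[R]_(N.+1)) (S : 'M[R]_(N.+1, K)) : Prop :=
  [/\ Pi ord0 ord0 = 1,
      (forall i, 0 <= Pi i ord0),
      (forall i k, 0 <= S i k),
      (forall k, S ord0 k = 1)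
    & row_free S (* non-redundant: no row is a linear combination of the others *)].

Definition arbitrage_free (N K : nat) (Pi : 'cV[R]_(N.+1)) (S : 'M[R]_(N.+1, K)) : Prop :=
  ~ exists v : 'cV[R]_(N.+1),
      [/\ (v^T *m Pi) ord0 ord0 <= 0,
          (forall k, 0 <= (S^T *m v) k ord0)
        & exists j, 0 < (S^T *m v) j ord0].

Definition complete (N K : nat) (Pi : 'cV[R]_(N.+1)) (S : 'M[R]_(N.+1, K)) : Prop :=
  arbitrage_free Pi S /\
  forall D : 'cV[R]_K, (forall k, 0 <= D k ord0) ->
    exists xi : 'cV[R]_(N.+1), D = S^T *m xi.

Definition in_Q (N K : nat) (Pi : 'cV[R]_(N.+1)) (S : 'M[R]_(N.+1, K)) (q : 'cV[R]_K) : Prop :=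
  [/\ (forall k, 0 < q k ord0), \sum_k q k ord0 = 1 & S *m q = Pi].

Definition least_squares_market (N K : nat) (Pi : 'cV[R]_(N.+1)) (S : 'M[R]_(N.+1, K)) : Prop :=
  arbitrage_free Pi S /\
  forall Splus : 'M[R]_(K, N.+1), is_pinv S Splus -> in_Q Pi S (Splus *m Pi).

End Market.

From mathcomp Require Import all_boot all_order all_algebra.
Set Implicit Arguments. Unset Strict Implicit. Unset Printing Implicit Defensive.
Import Order.TTheory GRing.Theory Num.Theory.
Local Open Scope ring_scope.

(* Non-redundancy makes S row-free, so the first Penrose condition forces
   S S^+ = 1 and q := S^+ Pi solves S q = Pi. In a complete market every
   Arrow-Debreu security e_j is replicated by some xi, whose price
   xi^T Pi = xi^T S q = q_j must be positive by absence of arbitrage; the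
   safe asset's row of ones gives sum_j q_j = Pi_0 = 1. *)

Lemma row_free_pinv_mulmx (F : fieldType) (m n : nat)
    (A : 'M[F]_(m, n)) (X : 'M[F]_(n, m)) :
  row_free A -> A *m X *m A = A -> A *m X = 1%:M.
Proof. by move=> freeA AXA; apply: (row_free_inj freeA); rewrite /= AXA mul1mx. Qed.

Lemma replicated_price (F : comPzRingType) (m n : nat) (A : 'M[F]_(m, n))
    (q : 'cV[F]_n) (xi : 'cV[F]_m) :
  xi^T *m (A *m q) = (A^T *m xi)^T *m q.
Proof. by rewrite trmx_mul trmxK mulmxA. Qed.

Lemma sum_state_prices (F : comPzRingType) (m n : nat) (A : 'M[F]_(m, n))
    (q : 'cV[F]_n) (i : 'I_m) :
  (forall k, A i k = 1) -> \sum_k q k ord0 = (A *m q) i ord0.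
Proof. by move=> Ai1; rewrite mxE; apply: eq_bigr => k _; rewrite Ai1 mul1r. Qed.

Section CompleteMarket.
Variables (R : realFieldType) (N K : nat).
Variables (Pi : 'cV[R]_(N.+1)) (S : 'M[R]_(N.+1, K)).

Lemma complete_state_price_gt0 (q : 'cV[R]_K) :
  complete Pi S -> S *m q = Pi -> forall j, 0 < q j ord0.
Proof.
move=> [noArb replicate] Sq j; rewrite ltNge; apply/negP => qj_le0.
have delta_ge0 k : 0 <= (delta_mx j 0 : 'cV[R]_K) k ord0 by rewrite mxE ler0n.
have [xi payoff_xi] := replicate _ delta_ge0.
apply: noArb; exists xi; split.
- rewrite -Sq replicated_price -payoff_xi trmx_delta -rowE.
  by rewrite mxE.
- by move=> k; rewrite -payoff_xi mxE ler0n.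
- by exists j; rewrite -payoff_xi mxE !eqxx ltr01.
Qed.

Lemma complete_in_Q (q : 'cV[R]_K) :
  price_system Pi S -> complete Pi S -> S *m q = Pi -> in_Q Pi S q.
Proof.
move=> [Pi0 _ _ S0 _] compl Sq; split => //.
- exact: complete_state_price_gt0.
- by rewrite (sum_state_prices q S0) Sq Pi0.
Qed.

End CompleteMarket.

Theorem mainTheorem4 (R : realFieldType) (N K : nat)
  (Pi : 'cV[R]_(N.+1)) (S : 'M[R]_(N.+1, K)) :
  price_system Pi S -> complete Pi S -> least_squares_market Pi S.
Proof.
move=> sys compl; split; first by case: compl.
move=> Splus [SXS _ _ _].
have SX1 : S *m Splus = 1%:M by apply: row_free_pinv_mulmx => //; case: sys.
by apply: complete_in_Q => //; rewrite mulmxA SX1 mul1mx.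
Qed.
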